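(* Let $\mathcal{F}$, $B_1,\dots,B_m$ be as in the context. Let $\mathcal{G}\subseteq\mathcal{F}$ and let $\phi:\mathcal{G}\to 2^{[n]}$ satisfy $\phi(G)\subseteq G$ for all $G\in\mathcal{G}$. Suppose $\mathcal{G}=\mathcal{G}_1\sqcup\mathcal{G}_2$ where every $F_k\in\mathcal{G}_1$ satisfies $|B_k|=d$ and $\phi(F_k)=B_k$. If the restriction $\phi|_{\mathcal{G}_2}$ is injective, then $\phi$ is injective.
   Context: Let $\mathcal{F}=\{F_1,\dots,F_m\}\subseteq\binom{[n]}{d+1}$ consist of distinct sets and have VC-dimension at most $d$ (no $(d+1)$-set $S$ is shattered, i.e. no $S$ such that every $A\subseteq S$ equals $F\cap S$ for some $F\in\mathcal{F}$). For $i\in[m]$, call $B\subsetneq F_i$ admissible for $F_i$ if $F\cap F_i\neq B$ for every $F\in\mathcal{F}$ (admissible sets exist by the VC-dimension assumption). For each $i$, $B_i$ is a fixed admissible set for $F_i$ of maximum cardinality among all admissible sets for $F_i$. *)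

From mathcomp Require Import all_boot.
Set Implicit Arguments. Unset Strict Implicit. Unset Printing Implicit Defensive.

(* Ground set [n] is modelled by 'I_n; a family F = {F_1,...,F_m} is an
   indexed family Fs : 'I_m -> {set 'I_n}. *)

Definition shattered (n m : nat) (Fs : 'I_m -> {set 'I_n}) (S : {set 'I_n}) :=
  forall A : {set 'I_n}, A \subset S -> exists i : 'I_m, Fs i :&: S = A.

Definition VCdim_le (n m : nat) (Fs : 'I_m -> {set 'I_n}) (d : nat) :=
  forall S : {set 'I_n}, #|S| = d.+1 -> ~ shattered Fs S.

Definition admissible (n m : nat) (Fs : 'I_m -> {set 'I_n}) (i : 'I_m)
  (B : {set 'I_n}) :=
  B \proper Fs i /\ forall j : 'I_m, Fs j :&: Fs i <> B.

From mathcomp Require Import all_boot.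
Set Implicit Arguments. Unset Strict Implicit.

(* An admissible set B of size d for F_k cannot lie in any other member F_l:
   admissibility makes the inclusion B \subset F_l :&: F_k strict, so the
   intersection already has the d+1 elements of F_k, forcing F_k = F_l.  The
   sets phi(F_k) = B_k for F_k in G1 are therefore "private", and injectivity
   on G2 extends to all of G. *)

Lemma injective_in_setU (T : finType) (rT : Type) (f : T -> rT) (A C : {set T}) :
    (forall x y, x \in A -> y \in A :|: C -> f x = f y -> x = y) ->
    {in C &, injective f} -> {in A :|: C &, injective f}.
Proof.
move=> injA injC x y xAC yAC fxy.
have [xA | xNA] := boolP (x \in A); first exact: injA.
have [yA | yNA] := boolP (y \in A); first by apply/esym/injA.
move: xAC yAC; rewrite !inE (negbTE xNA) (negbTE yNA) /= => xC yC.
exact: injC.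
Qed.

Section CoatomAdmissible.

Variables (n m : nat) (Fs : 'I_m -> {set 'I_n}).

Lemma admissible_proper_setI k l B :
  admissible Fs k B -> B \subset Fs l -> B \proper Fs l :&: Fs k.
Proof.
move=> [BFk notI] BFl.
rewrite properEneq subsetI BFl (proper_sub BFk) !andbT.
by apply/eqP => BI; apply: (notI l); rewrite BI.
Qed.

Lemma admissible_coatom_subset k l B :
  admissible Fs k B -> #|Fs k| = #|B|.+1 -> B \subset Fs l -> Fs k \subset Fs l.
Proof.
move=> admB cardFk BFl.
have lt_BI := proper_card (admissible_proper_setI admB BFl).
have -> : Fs k = Fs l :&: Fs k.
  by apply/esym/eqP; rewrite eqEcard subsetIr cardFk lt_BI.
exact: subsetIl.
Qed.

Lemma admissible_coatom_subset_eq k l B :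
  injective Fs -> #|Fs l| <= #|Fs k| ->
  admissible Fs k B -> #|Fs k| = #|B|.+1 -> B \subset Fs l -> k = l.
Proof.
move=> Fs_inj cardFl admB cardFk BFl.
apply: Fs_inj; apply/eqP.
by rewrite eqEcard (admissible_coatom_subset admB cardFk BFl).
Qed.

End CoatomAdmissible.

Theorem claim3p1 (n d m : nat) (Fs : 'I_m -> {set 'I_n})
  (Fs_inj : injective Fs)
  (Fs_card : forall i, #|Fs i| = d.+1)
  (Fs_VC : VCdim_le Fs d)
  (B : 'I_m -> {set 'I_n})
  (B_adm : forall i, admissible Fs i (B i))
  (B_max : forall i (C : {set 'I_n}), admissible Fs i C -> #|C| <= #|B i|)
  (G G1 G2 : {set 'I_m}) (phi : 'I_m -> {set 'I_n})
  (phi_sub : forall k, k \in G -> phi k \subset Fs k)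
  (G_split : G = G1 :|: G2) (G_disj : [disjoint G1 & G2])
  (G1_prop : forall k, k \in G1 -> #|B k| = d /\ phi k = B k)
  (phi_inj2 : {in G2 &, injective phi}) :
  {in G &, injective phi}.
Proof.
rewrite G_split; apply: injective_in_setU phi_inj2 => k l kG1 lG phi_kl.
have [cardBk phiBk] := G1_prop k kG1.
apply: (admissible_coatom_subset_eq Fs_inj _ (B_adm k)).
- by rewrite !Fs_card.
- by rewrite Fs_card cardBk.
- by rewrite -phiBk phi_kl phi_sub // G_split.
Qed.
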